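(* Let $\sharp\in\{cy,ra\}$ and assume (ER$\sharp$). Then for all $\boldsymbol\zeta,\alpha\in\mathbb R^M$ the map $\mathcal L^{[\alpha]*}_{\sharp,\boldsymbol\zeta}$ is a primitive completely positive map; in particular its spectral radius $r^\sharp_{\boldsymbol\zeta}(\alpha)$ is positive.
   Context: Finite-dimensional $\mathcal H_{\mathcal S},\mathcal H_{\mathcal E_j}$ ($j=1..M$), self-adjoint $H_{\mathcal S},H_{\mathcal E_j}$, self-adjoint $V_j$, $\tau_j>0$, $U_j=e^{-i\tau_j(H_{\mathcal S}\otimes\mathrm{Id}+\mathrm{Id}\otimes H_{\mathcal E_j}+V_j)}$; $\beta_{\rm ref}>0$; for $\boldsymbol\zeta\in\mathbb R^M$, $\rho_{\mathcal E_j}$ Gibbs state of $H_{\mathcal E_j}$ at $\beta_{\rm ref}-\zeta_j$; $\mathcal L_j(\rho)=\mathrm{Tr}_{\mathcal H_{\mathcal E_j}}(U_j(\rho\otimes\rho_{\mathcal E_j})U_j^* )$, $\mathcal L_{cy}=\mathcal L_M\circ\cdots\circ\mathcal L_1$, $\mathcal L_{ra}=\frac1M\sum\mathcal L_j$. Deformed maps $\mathcal L_j^{[\alpha]*}(X)=\mathrm{Tr}_{\mathcal H_{\mathcal E_j}}((\mathrm{Id}\otimes\rho_{\mathcal E_j}^{1-\alpha_j})U_j^*(X\otimes\rho_{\mathcal E_j}^{\alpha_j})U_j)$, $\mathcal L_{cy}^{[\alpha]*}=\mathcal L_1^{[\alpha]*}\circ\cdots\circ\mathcal L_M^{[\alpha]*}$,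 $\mathcal L_{ra}^{[\alpha]*}=\frac1M\sum\mathcal L_j^{[\alpha]*}$. A CP map with Kraus operators $V_i$ is primitive if for some $n$ the products $V_{i_1}\cdots V_{i_n}$ span all operators. (ER$\sharp$): $\mathcal L_{\sharp,\boldsymbol\zeta}$ is primitive for some $\boldsymbol\zeta$. *)

From HB Require Import structures.
From mathcomp Require Import all_boot all_order all_algebra.
From mathcomp Require Import sesquilinear spectral.
From mathcomp Require Import complex.
From mathcomp Require mxtens.
From mathcomp Require Import classical_sets reals sequences exp trigo.
Set Implicit Arguments.
Unset Strict Implicit.
Unset Printing Implicit Defensive.
Import Order.TTheory GRing.Theory Num.Theory.
Local Open Scope ring_scope.
Local Open Scope sesquilinear_scope.

Section QDefs.
Variable R : realType.
Local Notation C := R[i].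

(** Functional calculus for a (self-adjoint) matrix A = P^{-1} diag(λ) P
    (spectral decomposition of mathcomp's spectral.v): f(A) := P^{-1} diag(f λ) P.
    For self-adjoint A the eigenvalues λ are real, and f : R -> C is
    applied to their real parts. *)
Definition hfun n (f : R -> C) (A : 'M[C]_n) : 'M[C]_n :=
  invmx (spectralmx A) *m
  diag_mx (map_mx (fun z : C => f (complex.Re z)) (spectral_diag A)) *m
  spectralmx A.

Definition rfun (g : R -> R) : R -> C := fun x => Complex (g x) 0.

Definition expmi (t : R) : R -> C := fun x => Complex (cos (t * x)) (- sin (t * x)).

Definition unitary_evol n (tau : R) (K : 'M[C]_n) : 'M[C]_n := hfun (expmi tau) K.

Definition gibbs n (b : R) (H : 'M[C]_n) : 'M[C]_n :=
  let E := hfun (rfun (fun x => expR (- (b * x)))) H in (\tr E)^-1 *: E.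

Definition mxpowR n (rho : 'M[C]_n) (a : R) : 'M[C]_n :=
  hfun (rfun (fun x => powR x a)) rho.

Definition kron m p (A : 'M[C]_m) (B : 'M[C]_p) : 'M[C]_(m * p) :=
  mxtens.tensmx A B.

Definition ptrace2 m p (X : 'M[C]_(m * p)) : 'M[C]_m :=
  \matrix_(i, j) \sum_(l < p)
     X (mxtens.mxtens_index (i, l)) (mxtens.mxtens_index (j, l)).

Definition Ugen n (kj : nat) (HS : 'M[C]_n.+1) (HE : 'M[C]_kj.+1)
  (V : 'M[C]_(n.+1 * kj.+1)) (tau : R) : 'M[C]_(n.+1 * kj.+1) :=
  unitary_evol tau (kron HS 1%:M + kron 1%:M HE + V).

Definition Lj n kj HS HE V tau (b : R) (rho : 'M[C]_n.+1) : 'M[C]_n.+1 :=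
  let U := @Ugen n kj HS HE V tau in
  ptrace2 (U *m kron rho (gibbs b HE) *m U ^t*).

Definition Ljdual n kj HS HE V tau (b a : R) (X : 'M[C]_n.+1) : 'M[C]_n.+1 :=
  let U := @Ugen n kj HS HE V tau in
  let rE := gibbs b HE in
  ptrace2 (kron 1%:M (mxpowR rE (1 - a)) *m U ^t* *m kron X (mxpowR rE a) *m U).

Inductive protocol := cy | ra.

Section Model.
Variables (n M : nat) (k : 'I_M -> nat).
Variables (HS : 'M[C]_n.+1) (HE : forall j, 'M[C]_((k j).+1))
  (V : forall j, 'M[C]_(n.+1 * (k j).+1)) (tau : 'I_M -> R) (beta_ref : R).

Definition Lmap (j : 'I_M) (zeta : 'I_M -> R) :=
  @Lj n (k j) HS (HE j) (V j) (tau j) (beta_ref - zeta j).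

Definition Lmapdual (j : 'I_M) (zeta alpha : 'I_M -> R) :=
  @Ljdual n (k j) HS (HE j) (V j) (tau j) (beta_ref - zeta j) (alpha j).

Definition Lsharp (s : protocol) (zeta : 'I_M -> R) (X : 'M[C]_n.+1) : 'M[C]_n.+1 :=
  match s with
  | cy => foldl (fun Y j => Lmap j zeta Y) X (enum 'I_M)
  | ra => (M%:R)^-1 *: \sum_(j < M) Lmap j zeta X
  end.

Definition Lsharpdual (s : protocol) (zeta alpha : 'I_M -> R) (X : 'M[C]_n.+1)
  : 'M[C]_n.+1 :=
  match s with
  | cy => foldr (fun j Y => Lmapdual j zeta alpha Y) X (enum 'I_M)
  | ra => (M%:R)^-1 *: \sum_(j < M) Lmapdual j zeta alpha X
  end.
End Model.

Definition kraus_rep n (L : 'M[C]_n.+1 -> 'M[C]_n.+1) (p : nat)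
  (W : 'I_p -> 'M[C]_n.+1) : Prop :=
  forall X, L X = \sum_(i < p) W i *m X *m (W i) ^t*.

Definition primitive_cp n (L : 'M[C]_n.+1 -> 'M[C]_n.+1) : Prop :=
  exists (p : nat) (W : 'I_p -> 'M[C]_n.+1),
    kraus_rep L W /\
    exists m : nat, (0 < m)%N /\
      forall Y : 'M[C]_n.+1, exists c : {ffun 'I_m -> 'I_p} -> C,
        Y = \sum_(s : {ffun 'I_m -> 'I_p}) c s *: \prod_(i < m) W (s i).

Definition eigenvalue_map n (L : 'M[C]_n.+1 -> 'M[C]_n.+1) (z : C) : Prop :=
  exists X : 'M[C]_n.+1, X != 0 /\ L X = z *: X.

Definition spectral_radius n (L : 'M[C]_n.+1 -> 'M[C]_n.+1) : R :=
  sup [set r : R | exists z : C, eigenvalue_map L z /\ r = Normc.normc z].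

End QDefs.

(* Every map involved is completely positive with explicit Kraus operators.
   Diagonalising the environment Gibbs state as P^* diag(g) P, the Kraus
   operators of L_j are the blocks <l| U_j (1 ⊗ P^* ) |a> scaled by sqrt(g_a).
   If Q diagonalises ρ_{E_j}, with ρ_{E_j}^{1-α} and ρ_{E_j}^α having
   eigenvalues e and d, those of L_j^{[α]*} are the blocks
   <l| (1 ⊗ Q) U_j^* (1 ⊗ Q^* ) |a> scaled by sqrt(e_l d_a).  As e and d are
   positive for every ζ and α, and Q is unitary, the adjoint of each Kraus
   operator of L_j lies in the span of those of L_j^{[α]*}.  This relation
   survives composition (in reverse order) and positive combinations, hence
   holds between L_♯ and L_♯^{[α]*}; by uniqueness of Kraus families up to
   span it holds for the family witnessing primitivity of L_♯, and taking
   adjoints of its spanning products shows L_♯^{[α]*} primitive.  A primitive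
   map is not nilpotent, so it has a nonzero eigenvalue and its spectral
   radius is positive. *)

From Pilot Require Import Defs.
From HB Require Import structures.
From mathcomp Require Import all_boot all_order all_algebra.
From mathcomp Require Import sesquilinear spectral.
From mathcomp Require Import complex.
From mathcomp Require mxtens.
From mathcomp Require Import classical_sets reals sequences exp.
Import Order.TTheory GRing.Theory Num.Theory.
Local Open Scope ring_scope.
Local Open Scope sesquilinear_scope.
Set Implicit Arguments.
Unset Strict Implicit.
Unset Printing Implicit Defensive.

Section Adjoint.
Variable C : numClosedFieldType.

Lemma adjmx_sum m p (I : finType) (F : I -> 'M[C]_(m, p)) :
  (\sum_i F i)^t* = \sum_i (F i)^t*.
Proof. by rewrite linear_sum raddf_sum. Qed.

Lemma adjmxZ m p a (A : 'M[C]_(m, p)) : (a *: A)^t* = a^* *: A^t*.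
Proof. by rewrite linearZ /= map_mxZ. Qed.

Lemma adjmxM m p q (A : 'M[C]_(m, p)) (B : 'M[C]_(p, q)) :
  (A *m B)^t* = B^t* *m A^t*.
Proof. by rewrite trmx_mul map_mxM. Qed.

Lemma adjmx1 m : (1%:M : 'M[C]_m)^t* = 1%:M.
Proof. by rewrite trmx1 map_mx1. Qed.

Lemma adjmx_prod n k (G : 'I_k -> 'M[C]_n.+1) :
  (\prod_(i < k) G i)^t* = \prod_(i < k) (G (rev_ord i))^t*.
Proof.
elim: k G => [|k IH] G; first by rewrite !big_ord0 adjmx1.
rewrite big_ord_recl big_ord_recr /= -mulmxE adjmxM IH mulmxE; congr (_ * _).
  apply: eq_bigr => i _; congr (_ ^t*); congr G; apply: val_inj => /=.
  by rewrite subSS /bump leq0n add1n subnSK.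
by congr (_ ^t*); congr G; apply: val_inj; rewrite /= subnn.
Qed.

End Adjoint.

Section KrausMaps.
Variables (C : numClosedFieldType) (n : nat).
Local Notation MM := 'M[C]_n.+1.
Implicit Types (I J : finType) (X Y : MM).

Definition kraus_map I (W : I -> MM) X : MM := \sum_i W i *m X *m (W i)^t*.

Fact kraus_map_is_linear I (W : I -> MM) : linear (kraus_map W).
Proof.
move=> a X Y; rewrite /kraus_map scaler_sumr -big_split; apply: eq_bigr => i _.
by rewrite mulmxDr mulmxDl -scalemxAr -scalemxAl.
Qed.

HB.instance Definition _ I (W : I -> MM) :=
  GRing.isLinear.Build C MM MM *:%R (kraus_map W) (kraus_map_is_linear W).

Definition is_kraus (L : MM -> MM) I (W : I -> MM) := L =1 kraus_map W.

Definition prod_family I J (F : I -> MM) (G : J -> MM) (p : I * J) : MM :=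
  F p.1 *m G p.2.

Definition sum_family I J (F : I -> MM) (G : J -> MM) (s : I + J) : MM :=
  match s with inl i => F i | inr j => G j end.

Lemma kraus_map_comp I J (F : I -> MM) (G : J -> MM) X :
  kraus_map F (kraus_map G X) = kraus_map (prod_family F G) X.
Proof.
rewrite /kraus_map -(pair_bigA _ (fun i j => prod_family F G (i, j) *m X *m
  (prod_family F G (i, j))^t*)) /=.
apply: eq_bigr => i _; rewrite mulmx_sumr mulmx_suml; apply: eq_bigr => j _.
by rewrite adjmxM !mulmxA.
Qed.

Lemma kraus_mapD I J (F : I -> MM) (G : J -> MM) X :
  kraus_map F X + kraus_map G X = kraus_map (sum_family F G) X.
Proof. by rewrite /kraus_map big_sumType. Qed.

Lemma sqrtC_sandwich (c : C) (B X : MM) : 0 <= c ->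
  (sqrtC c *: B) *m X *m (sqrtC c *: B)^t* = c *: (B *m X *m B^t*).
Proof.
move=> c_ge0; rewrite adjmxZ -!scalemxAl -scalemxAr scalerA.
have /CrealP -> : sqrtC c \is Num.real by rewrite realE sqrtC_ge0 c_ge0.
by rewrite -expr2 sqrtCK.
Qed.

Lemma kraus_mapZ I (F : I -> MM) (c : C) X : 0 <= c ->
  c *: kraus_map F X = kraus_map (fun i => sqrtC c *: F i) X.
Proof.
move=> c_ge0; rewrite /kraus_map scaler_sumr; apply: eq_bigr => i _.
by rewrite sqrtC_sandwich.
Qed.

Lemma kraus_map1 X : kraus_map (fun _ : 'I_1 => 1%:M) X = X.
Proof. by rewrite /kraus_map big_ord1 mul1mx adjmx1 mulmx1. Qed.

Lemma kraus_map_void X : kraus_map (fun _ : 'I_0 => 0) X = 0.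
Proof. by rewrite /kraus_map big_ord0. Qed.

Definition kraus_mx I (W : I -> MM) := lin1_mx (mxvec \o kraus_map W \o vec_mx).

Lemma kraus_mxE I (W : I -> MM) u :
  u *m kraus_mx W = mxvec (kraus_map W (vec_mx u)).
Proof. exact: mul_rV_lin1. Qed.

Lemma kraus_mx_expE I (W : I -> MM) j u :
  u *m kraus_mx W ^+ j = mxvec (iter j (kraus_map W) (vec_mx u)).
Proof.
elim: j u => [|j IH] u; first by rewrite expr0 mulmx1 vec_mxK.
by rewrite exprSr -mulmxE mulmxA IH kraus_mxE mxvecK.
Qed.

End KrausMaps.

Section Spans.
Variables (C : numClosedFieldType) (n : nat).
Local Notation MM := 'M[C]_n.+1.
Implicit Types (I J : finType) (X Y : MM).

Definition in_span I (W : I -> MM) X := exists c : I -> C, X = \sum_i c i *: W i.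

Definition spanning I (W : I -> MM) := forall X, in_span W X.

Definition adj_in_span I J (F : I -> MM) (D : J -> MM) :=
  forall i, in_span D ((F i)^t*).

Lemma in_spanP I (W : I -> MM) X : in_span W X <-> X \in (\sum_i <[W i]>)%VS.
Proof.
split=> [[c ->]|/memv_sumP [v v_line ->]].
  by apply: memv_sumr => i _; rewrite memvZ ?memv_line.
have v_coef i : exists c : C, v i == c *: W i.
  by have /vlineP [c ->] := v_line i isT; exists c.
exists (fun i => xchoose (v_coef i)); apply: eq_bigr => i _; apply/eqP.
exact: (xchooseP (v_coef i)).
Qed.

Lemma in_span_self I (W : I -> MM) i : in_span W (W i).
Proof. by apply/in_spanP; apply: (sumv_sup i). Qed.

Lemma in_spanZ I (W : I -> MM) a X : in_span W X -> in_span W (a *: X).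
Proof. by move/in_spanP=> WX; apply/in_spanP; rewrite memvZ. Qed.

Lemma in_span_sum I J (W : I -> MM) (F : J -> MM) :
  (forall j, in_span W (F j)) -> in_span W (\sum_j F j).
Proof. by move=> WF; apply/in_spanP; apply: memv_suml => j _; apply/in_spanP. Qed.

Lemma in_span_trans I J (W : I -> MM) (K : J -> MM) X :
  (forall i, in_span K (W i)) -> in_span W X -> in_span K X.
Proof. by move=> KW [c ->]; apply: in_span_sum => i; apply: in_spanZ. Qed.

Lemma in_span_rescale I (W : I -> MM) (c : I -> C) X :
  (forall i, c i != 0) -> in_span W X -> in_span (fun i => c i *: W i) X.
Proof.
move=> c_neq0; apply: in_span_trans => i.
rewrite -[W i]scale1r -(mulVf (c_neq0 i)) -scalerA.
exact/in_spanZ/(in_span_self (fun i => c i *: W i)).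
Qed.

Lemma in_span_adj I (W : I -> MM) X :
  in_span W X -> in_span (fun i => (W i)^t*) (X^t*).
Proof.
move=> [c ->]; exists (fun i => (c i)^*).
by rewrite adjmx_sum; apply: eq_bigr => i _; rewrite adjmxZ.
Qed.

Lemma in_span_mul I J (F : I -> MM) (G : J -> MM) X Y :
  in_span F X -> in_span G Y -> in_span (prod_family F G) (X *m Y).
Proof.
move=> [c ->] [d ->]; exists (fun p => c p.1 * d p.2).
rewrite mulmx_suml -(pair_bigA _ (fun i j => (c i * d j) *: (F i *m G j))) /=.
apply: eq_bigr => i _; rewrite mulmx_sumr; apply: eq_bigr => j _.
by rewrite -scalemxAl -scalemxAr scalerA.
Qed.

Lemma spanning_prod_family I J (F : I -> MM) (G : J -> MM) :
  spanning F -> spanning G -> spanning (prod_family F G).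
Proof. by move=> spanF spanG X; rewrite -[X]mul1mx; apply: in_span_mul. Qed.

Lemma in_span_prod I (W : I -> MM) m (g : 'I_m -> MM) :
  (forall i, in_span W (g i)) ->
  in_span (fun s : {ffun 'I_m -> I} => \prod_(i < m) W (s i)) (\prod_(i < m) g i).
Proof.
move=> Wg.
have [c gE] : exists c : 'I_m -> I -> C, forall i, g i = \sum_j c i j *: W j.
  have coef i : exists c : {ffun I -> C}, g i == \sum_j c j *: W j.
    have [c ->] := Wg i; exists [ffun j => c j].
    by apply/eqP; apply: eq_bigr => j _; rewrite ffunE.
  by exists (fun i j => xchoose (coef i) j) => i; apply/eqP/(xchooseP (coef i)).
exists (fun s : {ffun 'I_m -> I} => \prod_(i < m) c i (s i)).
under eq_bigr do rewrite gE.
rewrite bigA_distr_bigA /=; apply: eq_bigr => s _.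
elim: (index_enum _) => [|i r IH]; first by rewrite !big_nil scale1r.
by rewrite !big_cons IH -scalerAl -scalerAr scalerA.
Qed.

End Spans.

Section KrausUniqueness.
Variables (C : numClosedFieldType) (n : nat).
Local Notation MM := 'M[C]_n.+1.
Local Notation II := ('I_n.+1 * 'I_n.+1)%type.

Definition mx_functional (Z : II -> C) (Y : MM) := \sum_(p : II) Z p * Y p.1 p.2.

Lemma delta_sandwichE (F : MM) l l' k k' :
  (F *m delta_mx l l' *m F^t*) k k' = F k l * (F k' l')^*.
Proof.
rewrite mxE (bigD1 l') //= big1 ?addr0; last first.
  move=> x /negbTE x_neq; rewrite mxE big1 ?mul0r // => y _.
  by rewrite mxE x_neq andbF mulr0.
rewrite !mxE (bigD1 l) //= big1 ?addr0; last first.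
  by move=> y /negbTE y_neq; rewrite mxE y_neq mulr0.
by rewrite mxE !eqxx mulr1.
Qed.

Lemma kraus_functional_sqr_sum L (I : finType) (A : I -> MM) Z : is_kraus L A ->
  \sum_i mx_functional Z (A i) * (mx_functional Z (A i))^* =
  \sum_(p : II) \sum_(q : II) Z p * (Z q)^* * L (delta_mx p.2 q.2) p.1 q.1.
Proof.
move=> LA; under eq_bigr do rewrite /mx_functional rmorph_sum mulr_suml.
rewrite exchange_big; apply: eq_bigr => p _.
under eq_bigr do rewrite mulr_sumr.
rewrite exchange_big; apply: eq_bigr => q _.
rewrite LA summxE mulr_sumr; apply: eq_bigr => i _.
by rewrite delta_sandwichE rmorphM mulrACA.
Qed.

Lemma separating_functional (I : finType) (A : I -> MM) X :
  X \notin (\sum_i <[A i]>)%VS ->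
  exists Z, (forall i, mx_functional Z (A i) = 0) /\ mx_functional Z X != 0.
Proof.
set U := (\sum_i <[A i]>)%VS => XU.
pose f Y : MM := Y - projv U Y.
have fX : f X != 0.
  by apply: contra XU; rewrite subr_eq0 => /eqP ->; apply: memv_proj.
have [[k l] /= fXkl] : exists p : II, f X p.1 p.2 != 0.
  apply/existsP; apply: contraR fX; rewrite negb_exists => /forallP f0.
  by apply/eqP/matrixP => k l; move/negPn/eqP: (f0 (k, l)) => /= ->; rewrite mxE.
pose Z (p : II) := f (delta_mx p.1 p.2) k l.
have sum_delta (Y : MM) : Y = \sum_(p : II) Y p.1 p.2 *: delta_mx p.1 p.2.
  by rewrite {1}[Y]matrix_sum_delta -(pair_bigA _ (fun i j => Y i j *: delta_mx i j)).
have fE Y : f Y k l = mx_functional Z Y.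
  rewrite /f {1 2}[Y]sum_delta linear_sum -sumrB summxE; apply: eq_bigr => p _.
  by rewrite linearZ -scalerBr mxE mulrC.
exists Z; split; last by rewrite -fE.
move=> i; rewrite -fE /f projv_id ?subrr ?mxE //.
by apply/in_spanP/in_span_self.
Qed.

(* By kraus_functional_sqr_sum, a functional vanishing on every A i also
   vanishes on every B j. *)
Lemma kraus_in_span L (I J : finType) (A : I -> MM) (B : J -> MM) :
  is_kraus L A -> is_kraus L B -> forall j, in_span A (B j).
Proof.
move=> LA LB j; apply/in_spanP/negPn/negP => /separating_functional [Z [ZA ZBj]].
have : \sum_j mx_functional Z (B j) * (mx_functional Z (B j))^* = 0.
  rewrite (kraus_functional_sqr_sum _ LB) -(kraus_functional_sqr_sum _ LA).
  by rewrite big1 // => i _; rewrite ZA mul0r.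
move/psumr_eq0P => /(_ (fun j _ => mul_conjC_ge0 _) j isT) /eqP.
by rewrite mul_conjC_eq0 (negbTE ZBj).
Qed.

End KrausUniqueness.

Section AdjointSpanned.
Variables (C : numClosedFieldType) (n : nat).
Local Notation MM := 'M[C]_n.+1.
Implicit Types (L Ld : MM -> MM).

Definition kraus_adj_spanned L Ld :=
  exists (I J : finType) (F : I -> MM) (D : J -> MM),
    [/\ is_kraus L F, is_kraus Ld D & adj_in_span F D].

Lemma eq_kraus_adj_spanned L1 Ld1 L2 Ld2 : kraus_adj_spanned L1 Ld1 ->
  L1 =1 L2 -> Ld1 =1 Ld2 -> kraus_adj_spanned L2 Ld2.
Proof.
move=> [I [J [F [D [LF LdD FD]]]]] L12 Ld12.
by exists I, J, F, D; split => // X; rewrite -?L12 -?Ld12.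
Qed.

Lemma kraus_adj_spanned_id : kraus_adj_spanned id id.
Proof.
exists 'I_1, 'I_1, (fun _ => 1%:M), (fun _ => 1%:M); split => [X|X|i].
- by rewrite kraus_map1.
- by rewrite kraus_map1.
- by rewrite adjmx1; apply: (in_span_self (fun _ : 'I_1 => 1%:M) i).
Qed.

Lemma kraus_adj_spanned0 L Ld :
  L =1 (fun _ => 0) -> Ld =1 (fun _ => 0) -> kraus_adj_spanned L Ld.
Proof.
move=> L0 Ld0; exists 'I_0, 'I_0, (fun _ => 0), (fun _ => 0).
by split => [X|X|[]//]; rewrite kraus_map_void ?L0 ?Ld0.
Qed.

Lemma kraus_adj_spanned_comp L Ld L' Ld' :
  kraus_adj_spanned L Ld -> kraus_adj_spanned L' Ld' ->
  kraus_adj_spanned (L \o L') (Ld' \o Ld).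
Proof.
move=> [I [J [F [D [LF LdD FD]]]]] [I' [J' [F' [D' [LF' LdD' FD']]]]].
exists (I * I')%type, (J' * J)%type, (prod_family F F'), (prod_family D' D).
split => [X|X|[i i']] /=.
- by rewrite LF LF' kraus_map_comp.
- by rewrite LdD' LdD kraus_map_comp.
- by rewrite /prod_family adjmxM; apply: in_span_mul.
Qed.

Lemma kraus_adj_spanned_add L Ld L' Ld' :
  kraus_adj_spanned L Ld -> kraus_adj_spanned L' Ld' ->
  kraus_adj_spanned (fun X => L X + L' X) (fun X => Ld X + Ld' X).
Proof.
move=> [I [J [F [D [LF LdD FD]]]]] [I' [J' [F' [D' [LF' LdD' FD']]]]].
exists (I + I')%type, (J + J')%type, (sum_family F F'), (sum_family D D').
split => [X|X|[i|i]] /=.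
- by rewrite LF LF' kraus_mapD.
- by rewrite LdD LdD' kraus_mapD.
- by apply: in_span_trans (FD i) => j; apply: (in_span_self (sum_family D D') (inl j)).
- by apply: in_span_trans (FD' i) => j; apply: (in_span_self (sum_family D D') (inr j)).
Qed.

Lemma kraus_adj_spannedZ (c : C) L Ld : 0 < c ->
  kraus_adj_spanned L Ld -> kraus_adj_spanned (fun X => c *: L X) (fun X => c *: Ld X).
Proof.
move=> c_gt0 [I [J [F [D [LF LdD FD]]]]].
exists I, J, (fun i => sqrtC c *: F i), (fun j => sqrtC c *: D j).
split => [X|X|i].
- by rewrite LF kraus_mapZ ?ltW.
- by rewrite LdD kraus_mapZ ?ltW.
- rewrite adjmxZ; apply/in_spanZ/in_span_rescale => [j|]; last exact: FD.
  by rewrite sqrtC_eq0 gt_eqF.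
Qed.

End AdjointSpanned.

Section Iterates.
Variables (C : numClosedFieldType) (n : nat).
Local Notation MM := 'M[C]_n.+1.

Lemma iter_kraus_map_products (I : finType) (W : I -> MM) j :
  exists (J : finType) (G : J -> MM), is_kraus (iter j (kraus_map W)) G /\
    forall s : {ffun 'I_j -> I}, in_span G (\prod_(i < j) W (s i)).
Proof.
elim: j => [|j [J [G [WG Gprod]]]].
  exists 'I_1, (fun _ => 1%:M); split => [X|s]; first by rewrite kraus_map1.
  by rewrite big_ord0; apply: (in_span_self (fun _ : 'I_1 => (1%:M : MM)) ord0).
exists (I * J)%type, (prod_family W G); split => [X|s].
  by rewrite iterS WG kraus_map_comp.
rewrite big_ord_recl -mulmxE; apply: in_span_mul; first exact: in_span_self.
by have := Gprod [ffun i => s (lift ord0 i)]; under eq_bigr do rewrite ffunE.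
Qed.

Lemma iter_kraus_map_spanning (I : finType) (G : I -> MM) : spanning G ->
  forall k, exists (J : finType) (H : J -> MM),
    is_kraus (iter k.+1 (kraus_map G)) H /\ spanning H.
Proof.
move=> Gspan; elim=> [|k [J [H [GH Hspan]]]]; first by exists I, G.
exists (I * J)%type, (prod_family G H); split; last exact: spanning_prod_family.
by move=> X; rewrite iterS GH kraus_map_comp.
Qed.

Lemma kraus_spanning_neq0 L (I : finType) (G : I -> MM) :
  is_kraus L G -> spanning G -> ~ (forall X, L X = 0).
Proof.
move=> LG Gspan L0.
have Lvoid : is_kraus L (fun _ : 'I_0 => 0) by move=> X; rewrite L0 kraus_map_void.
have [c] := Gspan 1%:M; rewrite big1 => [/matrixP/(_ ord0 ord0)/eqP|i _].
  by rewrite !mxE oner_eq0.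
by have [d ->] := kraus_in_span Lvoid LG i; rewrite big_ord0 scaler0.
Qed.

End Iterates.

Lemma eigenvalue_or_nilpotent (F : closedFieldType) d (A : 'M[F]_d) :
  (exists2 z, z != 0 & eigenvalue A z) \/ A ^+ d = 0.
Proof.
case: d A => [|d] A; first by right; apply/matrixP => [[]].
have [r charE] := closed_field_poly_normal (char_poly A).
rewrite (monicP (char_poly_monic A)) scale1r in charE.
have [/hasP [z zr z_neq0] | /hasPn r0] := boolP (has (fun z => z != 0) r).
  by left; exists z => //; rewrite eigenvalue_root_char charE root_prod_XsubC.
right.
have charXn : char_poly A = 'X ^+ size r.
  rewrite charE (eq_big_seq (fun _ => 'X)) => [|z zr]; last first.
    by have /negPn/eqP -> := r0 z zr; rewrite subr0.
  by rewrite big_const_seq count_predT; elim: (size r) => //= k ->; rewrite exprS.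
have size_r : size r = d.+1.
  by have := size_char_poly A; rewrite charXn size_polyXn => -[].
by have := Cayley_Hamilton A; rewrite charXn size_r rmorphXn /= horner_mx_X.
Qed.

Lemma eigenvalue_norm_le (F : numFieldType) d (A : 'M[F]_d) (v : 'rV_d) z :
  v != 0 -> v *m A = z *: v -> `|z| <= \sum_i \sum_j `|A i j|.
Proof.
move=> v_neq0 vA.
have v_norm_gt0 : 0 < \sum_j `|v 0 j|.
  have [j vj_neq0] : exists j, v 0 j != 0.
    apply/existsP; apply: contraR v_neq0; rewrite negb_exists => /forallP v0.
    by apply/eqP/rowP => j; move/negPn/eqP: (v0 j) => ->; rewrite mxE.
  by rewrite (bigD1 j) //= ltr_pwDl ?normr_gt0 ?sumr_ge0.
rewrite -(ler_pM2r v_norm_gt0).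
have -> : `|z| * \sum_j `|v 0 j| = \sum_j `|(v *m A) 0 j|.
  by rewrite mulr_sumr; apply: eq_bigr => j _; rewrite vA mxE normrM.
apply: (@le_trans _ _ (\sum_j \sum_i `|v 0 i| * `|A i j|)).
  apply: ler_sum => j _; rewrite mxE; apply: (le_trans (ler_norm_sum _ _ _)).
  by apply: ler_sum => i _; rewrite normrM.
rewrite exchange_big mulr_sumr; apply: ler_sum => i _; rewrite -mulr_sumr mulrC.
apply: ler_wpM2r => //; rewrite [leRHS](bigD1 i) //= lerDl.
by do 2!apply: sumr_ge0 => ? _.
Qed.

Section PrimitiveMaps.
Variables (R : realType) (n : nat).
Local Notation C := R[i].
Local Notation MM := 'M[C]_n.+1.

Lemma primitive_cp_adj_spanned (L Ld : MM -> MM) :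
  kraus_adj_spanned L Ld -> primitive_cp L -> primitive_cp Ld.
Proof.
move=> [I [J [F [D [LF LdD FD]]]]] [p [W [LW [m [m_gt0 Wspan]]]]].
pose D' (i : 'I_#|J|) := D (enum_val i).
have DD' j : in_span D' (D j) by rewrite -[j]enum_rankK; apply: (in_span_self D').
have WD' i : in_span D' ((W i)^t*).
  apply: in_span_trans (in_span_adj (kraus_in_span LF LW i)) => i'.
  by apply: in_span_trans (FD i') => j; apply: DD'.
exists #|J|, D'; split.
  move=> X; rewrite LdD /kraus_map (reindex (@enum_val J predT)) //.
  by exists (@enum_rank J) => x _; [rewrite enum_valK | rewrite enum_rankK].
exists m; split => // Y; have [c YE] := Wspan (Y^t*).
suff : in_span (fun s : {ffun 'I_m -> 'I_#|J|} => \prod_(i < m) D' (s i)) Y by [].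
rewrite -[Y]trmxCK YE adjmx_sum; apply: in_span_sum => s.
by rewrite adjmxZ adjmx_prod; apply/in_spanZ/in_span_prod => i.
Qed.

Lemma primitive_iter_neq0 (L : MM -> MM) j :
  primitive_cp L -> ~ (forall X, iter j L X = 0).
Proof.
move=> [p [W [LW [m [m_gt0 Wspan]]]]] iter0; have {}LW : is_kraus L W := LW.
have [J [G [WG Gprod]]] := iter_kraus_map_products W m.
have Gspan : spanning G := fun X => in_span_trans Gprod (Wspan X).
have [J' [H [GH Hspan]]] := iter_kraus_map_spanning Gspan j.
apply: (kraus_spanning_neq0 GH Hspan) => X.
rewrite -(eq_iter WG) -iterM -(eq_iter LW).
have j_le : (j <= j.+1 * m)%N by rewrite ltnW // leq_pmulr.
rewrite -(subnK j_le) iterD iter0; apply: iter_fix.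
by rewrite LW linear0.
Qed.

Lemma kraus_eigenvalue_normc_le (L : MM -> MM) (I : finType) (W : I -> MM) z :
  is_kraus L W -> Defs.eigenvalue_map L z ->
  Normc.normc z <= \sum_i \sum_j Normc.normc (kraus_mx W i j).
Proof.
move=> LW [X [X_neq0 LX]]; rewrite -lecR.
have -> : ((\sum_i \sum_j Normc.normc (kraus_mx W i j))%:C)%C =
          \sum_i \sum_j `|kraus_mx W i j|.
  by rewrite rmorph_sum; apply: eq_bigr => i _; rewrite rmorph_sum.
apply: (@eigenvalue_norm_le _ _ _ (mxvec X)).
  by apply: contra X_neq0 => /eqP X0; rewrite -[X]mxvecK X0 linear0.
by rewrite kraus_mxE mxvecK -LW LX linearZ.
Qed.

Lemma primitive_spectral_radius_gt0 (L : MM -> MM) :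
  primitive_cp L -> 0 < spectral_radius L.
Proof.
move=> Lprim; have [p [W [LW _]]] := Lprim; have {}LW : is_kraus L W := LW.
have [z z_neq0 /eigenvalueP [v vA v_neq0]] :
    exists2 z, z != 0 & eigenvalue (kraus_mx W) z.
  have [//|W_nil] := eigenvalue_or_nilpotent (kraus_mx W).
  case: (primitive_iter_neq0 (j := (n.+1 * n.+1)%N) Lprim) => X.
  apply: (can_inj mxvecK); rewrite linear0 (eq_iter LW) -[X]mxvecK.
  by rewrite -kraus_mx_expE W_nil mulmx0.
have Lz : Defs.eigenvalue_map L z.
  exists (vec_mx v); split.
    by apply: contra v_neq0 => /eqP v0; rewrite -[v]vec_mxK v0 linear0.
  by apply: (can_inj mxvecK); rewrite LW -kraus_mxE vA linearZ /= vec_mxK.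
rewrite /spectral_radius; set S := (X in sup X).
have S_sup : has_sup S.
  split; first by exists (Normc.normc z), z.
  exists (\sum_i \sum_j Normc.normc (kraus_mx W i j)) => _ [z' [Lz' ->]].
  exact: kraus_eigenvalue_normc_le LW Lz'.
apply: (lt_le_trans _ (sup_upper_bound S_sup (ex_intro _ z (conj Lz erefl)))).
have normc_ge0 : 0 <= Normc.normc z by rewrite -lecR; apply: (normr_ge0 z).
rewrite lt_neqAle normc_ge0 andbT eq_sym.
by apply: contra z_neq0 => /eqP /Normc.eq0_normc ->.
Qed.

End PrimitiveMaps.

Section EnvironmentBlocks.
Variables (R : realType) (n k : nat).
Local Notation C := R[i].
Local Notation MM := 'M[C]_n.+1.
Local Notation KK := 'M[C]_k.+1.
Local Notation BB := 'M[C]_(n.+1 * k.+1).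
Local Notation idx := (@mxtens.mxtens_index n.+1 k.+1).

(* The operator <l| Y |a> on the system, for environment basis vectors l, a. *)
Definition env_block (Y : BB) (l a : 'I_k.+1) : MM :=
  \matrix_(i, x) Y (idx (i, l)) (idx (x, a)).

Lemma sum_mxtens_index (F : 'I_(n.+1 * k.+1) -> C) :
  \sum_P F P = \sum_x \sum_a F (idx (x, a)).
Proof.
rewrite (reindex idx) /=; last first.
  exists (@mxtens.mxtens_unindex n.+1 k.+1) => ? _.
    exact: mxtens.mxtens_indexK.
  exact: mxtens.mxtens_unindexK.
by rewrite pair_bigA /=; apply: eq_bigr => -[x a].
Qed.

Lemma kronE (A : MM) (B : KK) i l x a :
  kron A B (idx (i, l)) (idx (x, a)) = A i x * B l a.
Proof. exact: mxtens.tensmxE. Qed.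

Lemma kron_mul (A A' : MM) (B B' : KK) :
  kron A B *m kron A' B' = kron (A *m A') (B *m B').
Proof. exact: mxtens.tensmx_mul. Qed.

Lemma adjmx_kron (A : MM) (B : KK) : (kron A B)^t* = kron (A^t*) (B^t*).
Proof. by rewrite /kron mxtens.trmx_tens mxtens.map_mxT. Qed.

Lemma kron1 : kron (1%:M : MM) (1%:M : KK) = 1%:M.
Proof.
apply/matrixP => P Q.
case: (mxtens.mxtens_indexP P) => i l; case: (mxtens.mxtens_indexP Q) => j a.
rewrite kronE !mxE -natrM mulnb.
by rewrite (inj_eq (can_inj (@mxtens.mxtens_indexK _ _))) xpair_eqE.
Qed.

Lemma kron1_mulmxE (B : KK) (Z : BB) i l Q :
  (kron 1%:M B *m Z) (idx (i, l)) Q = \sum_l' B l l' * Z (idx (i, l')) Q.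
Proof.
rewrite mxE sum_mxtens_index (bigD1 i) //= [X in _ + X]big1 ?addr0; last first.
  move=> x x_neq; rewrite big1 // => a _.
  by rewrite kronE mxE eq_sym (negbTE x_neq) !mul0r.
by apply: eq_bigr => l' _; rewrite kronE mxE eqxx mul1r.
Qed.

Lemma mulmx_kron1E (Z : BB) (B : KK) P j l :
  (Z *m kron 1%:M B) P (idx (j, l)) = \sum_l' Z P (idx (j, l')) * B l' l.
Proof.
rewrite mxE sum_mxtens_index (bigD1 j) //= [X in _ + X]big1 ?addr0; last first.
  move=> x x_neq; rewrite big1 // => a _.
  by rewrite kronE mxE (negbTE x_neq) mul0r mulr0.
by apply: eq_bigr => l' _; rewrite kronE mxE eqxx mul1r.
Qed.

Lemma mulmx_kron_diagE (Y : BB) (X : MM) (d : 'rV[C]_k.+1) P y b :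
  (Y *m kron X (diag_mx d)) P (idx (y, b)) = d 0 b * \sum_x Y P (idx (x, b)) * X x y.
Proof.
rewrite mxE sum_mxtens_index mulr_sumr; apply: eq_bigr => x _.
rewrite (bigD1 b) //= big1 ?addr0; last first.
  by move=> a a_neq; rewrite kronE mxE (negbTE a_neq) mulr0n !mulr0.
by rewrite kronE !mxE eqxx mulr1n mulrA mulrC.
Qed.

Lemma ptrace2_kron_diag (Y1 Y2 : BB) (X : MM) (d : 'rV[C]_k.+1) :
  ptrace2 (Y1 *m kron X (diag_mx d) *m Y2) =
  \sum_l \sum_a d 0 a *: (env_block Y1 l a *m X *m env_block Y2 a l).
Proof.
apply/matrixP => i j; rewrite [LHS]mxE summxE; apply: eq_bigr => l _.
rewrite summxE [LHS]mxE sum_mxtens_index exchange_big /=; apply: eq_bigr => a _.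
rewrite [RHS]mxE [X in _ = _ * X]mxE mulr_sumr; apply: eq_bigr => y _.
rewrite mulmx_kron_diagE -mulrA; congr (_ * _).
by rewrite !mxE !mulr_suml; apply: eq_bigr => x _; rewrite !mxE.
Qed.

Lemma ptrace2_kron1_cycle (B : KK) (Z : BB) :
  ptrace2 (kron 1%:M B *m Z) = ptrace2 (Z *m kron 1%:M B).
Proof.
apply/matrixP => i j; rewrite !mxE.
under [LHS]eq_bigr do rewrite kron1_mulmxE.
under [RHS]eq_bigr do rewrite mulmx_kron1E.
rewrite exchange_big; apply: eq_bigr => l _; apply: eq_bigr => l' _.
by rewrite mulrC.
Qed.

Lemma env_block_kron1 (A B : KK) (Z : BB) l a :
  env_block (kron 1%:M A *m Z *m kron 1%:M B) l a =
  \sum_l' \sum_a' (A l l' * B a' a) *: env_block Z l' a'.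
Proof.
apply/matrixP => i x; rewrite mxE mulmx_kron1E summxE.
under eq_bigr do rewrite kron1_mulmxE mulr_suml.
rewrite exchange_big; apply: eq_bigr => l' _; rewrite summxE.
by apply: eq_bigr => a' _; rewrite !mxE mulrAC mulrC mulrA.
Qed.

Lemma env_block_kron1_diag (e : 'rV[C]_k.+1) (Z : BB) l a :
  env_block (kron 1%:M (diag_mx e) *m Z) l a = e 0 l *: env_block Z l a.
Proof.
apply/matrixP => i x; rewrite [LHS]mxE kron1_mulmxE (bigD1 l) //= big1 ?addr0.
  by rewrite !mxE eqxx mulr1n.
by move=> l' l'_neq; rewrite !mxE eq_sym (negbTE l'_neq) mulr0n mul0r.
Qed.

Lemma env_block_adj (Z : BB) l a : env_block (Z^t*) a l = (env_block Z l a)^t*.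
Proof. by apply/matrixP => i x; rewrite !mxE. Qed.

End EnvironmentBlocks.

Section PositiveDefinite.
Variables (R : realType) (k : nat).
Local Notation C := R[i].
Local Notation KK := 'M[C]_k.+1.

Definition posdef_decomp (G P : KK) (g : 'rV[C]_k.+1) :=
  [/\ P \is unitarymx, forall a, 0 < g 0 a & G = P^t* *m diag_mx g *m P].

Lemma hfunE (f : R -> C) (A : KK) :
  hfun f A = (spectralmx A)^t* *m
    diag_mx (map_mx (fun z : C => f (complex.Re z)) (spectral_diag A)) *m spectralmx A.
Proof. by rewrite /hfun invmx_unitary // spectral_unitarymx. Qed.

Lemma gibbs_posdef b (H : KK) : exists P g, posdef_decomp (gibbs b H) P g.
Proof.
set f := rfun (fun x => expR (- (b * x))); set E := hfun f H; set P := spectralmx H.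
set g := map_mx (fun z : C => f (complex.Re z)) (spectral_diag H).
have PU : P \is unitarymx by apply: spectral_unitarymx.
have g_gt0 a : 0 < g 0 a by rewrite mxE /rfun ltcE /= eqxx expR_gt0.
have EE : E = P^t* *m diag_mx g *m P by rewrite /E hfunE.
have trE : \tr E = \sum_a g 0 a.
  by rewrite EE mxtrace_mulC mulmxA (unitarymxP PU) mul1mx mxtrace_diag.
have trE_gt0 : 0 < \tr E.
  by rewrite trE (bigD1 ord0) //= ltr_pwDl // sumr_ge0 // => a _; apply: ltW.
exists P, ((\tr E)^-1 *: g); split => // [a|].
  by rewrite mxE mulr_gt0 ?invr_gt0.
by rewrite /gibbs -/E {2}EE linearZ /= scalemxAl scalemxAr.
Qed.

Lemma unitary_row_neq0 (Q : KK) l : Q \is unitarymx -> row l Q != 0.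
Proof.
move=> /unitarymxP QQ; apply/eqP => Ql0.
have := congr1 (row l) QQ; rewrite row_mul Ql0 mul0mx row1 => /rowP/(_ l).
by rewrite !mxE !eqxx => /esym/eqP; rewrite oner_eq0.
Qed.

Lemma posdef_decomp_eigenvalue_gt0 (G P : KK) g (w : 'rV_k.+1) (z : C) :
  posdef_decomp G P g -> w != 0 -> w *m G = z *: w -> 0 < z.
Proof.
move=> [PU g_gt0 ->] w_neq0 wG.
pose u := w *m P^t*.
have u_neq0 : u != 0.
  by apply: contra w_neq0 => /eqP u0; rewrite -(mulmxKtV w PU erefl) -/u u0 mul0mx.
have uD : u *m diag_mx g = z *: u.
  by rewrite /u -[LHS](mulmxtVK _ PU) -(mulmxA w) -(mulmxA w) wG -scalemxAl.
clearbody u; have [x ux_neq0] : exists x, u 0 x != 0.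
  apply/existsP; apply: contraR u_neq0; rewrite negb_exists => /forallP u0.
  by apply/eqP/rowP => x; move/negPn/eqP: (u0 x) => ->; rewrite mxE.
have := congr1 (fun v : 'rV_k.+1 => v 0 x) uD; rewrite /= mul_mx_diag !mxE.
by rewrite mulrC => /(mulIf ux_neq0) <-.
Qed.

Lemma spectral_row_eigen (G : KK) l : G \is normalmx ->
  row l (spectralmx G) *m G = spectral_diag G 0 l *: row l (spectralmx G).
Proof.
move=> /orthomx_spectralP GE.
set Q := spectralmx G in GE *; set q := spectral_diag G in GE *.
have QU : Q \is unitarymx := spectral_unitarymx G.
rewrite -row_mul [in LHS]GE invmx_unitary // !mulmxA (unitarymxP QU) mul1mx.
by apply/rowP => x; rewrite mul_diag_mx !mxE.
Qed.

Lemma posdef_decomp_spectral (G P : KK) g :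
  posdef_decomp G P g -> posdef_decomp G (spectralmx G) (spectral_diag G).
Proof.
move=> Gdec; have [PU _ GE] := Gdec.
have G_normal : G \is normalmx.
  by apply/orthomx_spectral_subproof; exists (P, g); rewrite //= invmx_unitary.
split; [exact: spectral_unitarymx| |].
  move=> l; have Gl := spectral_row_eigen l G_normal.
  apply: (posdef_decomp_eigenvalue_gt0 Gdec _ Gl).
  exact/unitary_row_neq0/spectral_unitarymx.
by rewrite -invmx_unitary ?spectral_unitarymx //; apply/orthomx_spectralP.
Qed.

Lemma mxpowR_posdef (G P : KK) g s : posdef_decomp G P g ->
  posdef_decomp (mxpowR G s) (spectralmx G)
    (map_mx (fun z : C => rfun (fun x => powR x s) (complex.Re z)) (spectral_diag G)).
Proof.
move=> /posdef_decomp_spectral [QU q_gt0 _].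
split => // [l|]; last by rewrite /mxpowR hfunE.
have := q_gt0 l; rewrite mxE /rfun !ltcE /= eqxx => /andP [_ q_gt0l].
exact: powR_gt0.
Qed.

End PositiveDefinite.

Section InteractionStep.
Variables (R : realType) (n k : nat).
Local Notation C := R[i].
Local Notation MM := 'M[C]_n.+1.
Local Notation KK := 'M[C]_k.+1.
Local Notation BB := 'M[C]_(n.+1 * k.+1).
Local Notation I1 := (1%:M : MM).
Implicit Types (U : BB) (P Q : KK) (g e d : 'rV[C]_k.+1).

Lemma adjmx_kron1 (A : KK) : (kron I1 A)^t* = kron I1 (A^t*).
Proof. by rewrite adjmx_kron adjmx1. Qed.

Lemma ptrace2_conj_kraus U P g : (forall a, 0 <= g 0 a) ->
  is_kraus (fun X => ptrace2 (U *m kron X (P^t* *m diag_mx g *m P) *m U^t*))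
    (fun p : 'I_k.+1 * 'I_k.+1 =>
       sqrtC (g 0 p.2) *: env_block (U *m kron I1 (P^t*)) p.1 p.2).
Proof.
move=> g_ge0 X.
have -> : kron X (P^t* *m diag_mx g *m P) =
    kron I1 (P^t*) *m kron X (diag_mx g) *m kron I1 P.
  by rewrite !kron_mul mul1mx mulmx1.
have -> : U *m (kron I1 (P^t*) *m kron X (diag_mx g) *m kron I1 P) *m U^t* =
    (U *m kron I1 (P^t*)) *m kron X (diag_mx g) *m (U *m kron I1 (P^t*))^t*.
  by rewrite adjmxM adjmx_kron1 trmxCK !mulmxA.
set Y := U *m kron I1 (P^t*).
rewrite ptrace2_kron_diag /kraus_map -(pair_bigA _ (fun l a =>
  (sqrtC (g 0 a) *: env_block Y l a) *m X *m (sqrtC (g 0 a) *: env_block Y l a)^t*)).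
apply: eq_bigr => l _; apply: eq_bigr => a _.
by rewrite (sqrtC_sandwich _ _ (g_ge0 a)) env_block_adj.
Qed.

Lemma ptrace2_dual_kraus U Q e d : (forall l, 0 <= e 0 l) -> (forall a, 0 <= d 0 a) ->
  is_kraus (fun X => ptrace2 (kron I1 (Q^t* *m diag_mx e *m Q) *m U^t* *m
                              kron X (Q^t* *m diag_mx d *m Q) *m U))
    (fun p : 'I_k.+1 * 'I_k.+1 => sqrtC (e 0 p.1 * d 0 p.2) *:
       env_block (kron I1 Q *m U^t* *m kron I1 (Q^t*)) p.1 p.2).
Proof.
move=> e_ge0 d_ge0 X; set Y := kron I1 Q *m U^t* *m kron I1 (Q^t*).
have -> : kron I1 (Q^t* *m diag_mx e *m Q) =
    kron I1 (Q^t*) *m kron I1 (diag_mx e) *m kron I1 Q.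
  by rewrite !kron_mul !mul1mx.
have -> : kron X (Q^t* *m diag_mx d *m Q) =
    kron I1 (Q^t*) *m kron X (diag_mx d) *m kron I1 Q.
  by rewrite !kron_mul mul1mx mulmx1.
have -> : kron I1 (Q^t*) *m kron I1 (diag_mx e) *m kron I1 Q *m U^t* *m
    (kron I1 (Q^t*) *m kron X (diag_mx d) *m kron I1 Q) *m U =
    kron I1 (Q^t*) *m
      (kron I1 (diag_mx e) *m Y *m kron X (diag_mx d) *m (kron I1 Q *m U)).
  by rewrite /Y !mulmxA.
rewrite ptrace2_kron1_cycle.
have -> : kron I1 (diag_mx e) *m Y *m kron X (diag_mx d) *m (kron I1 Q *m U) *m
    kron I1 (Q^t*) = (kron I1 (diag_mx e) *m Y) *m kron X (diag_mx d) *m Y^t*.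
  by rewrite /Y !adjmxM !adjmx_kron1 !trmxCK !mulmxA.
rewrite ptrace2_kron_diag /kraus_map -(pair_bigA _ (fun l a =>
  (sqrtC (e 0 l * d 0 a) *: env_block Y l a) *m X *m
  (sqrtC (e 0 l * d 0 a) *: env_block Y l a)^t*)).
apply: eq_bigr => l _; apply: eq_bigr => a _.
rewrite (sqrtC_sandwich _ _ (mulr_ge0 (e_ge0 l) (d_ge0 a))).
by rewrite env_block_kron1_diag env_block_adj -!scalemxAl scalerA mulrC.
Qed.

Lemma env_block_adj_in_span U P Q g e d :
  Q \is unitarymx -> (forall l, 0 < e 0 l) -> (forall a, 0 < d 0 a) ->
  adj_in_span
    (fun p : 'I_k.+1 * 'I_k.+1 =>
       sqrtC (g 0 p.2) *: env_block (U *m kron I1 (P^t*)) p.1 p.2)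
    (fun p : 'I_k.+1 * 'I_k.+1 => sqrtC (e 0 p.1 * d 0 p.2) *:
       env_block (kron I1 Q *m U^t* *m kron I1 (Q^t*)) p.1 p.2).
Proof.
move=> QU e_gt0 d_gt0 [l a] /=; set Y := kron I1 Q *m U^t* *m kron I1 (Q^t*).
have QtQ : Q^t* *m Q = 1%:M by apply: mulmx1C; apply/unitarymxP.
rewrite adjmxZ -env_block_adj; apply: in_spanZ.
have -> : (U *m kron I1 (P^t*))^t* = kron I1 (P *m Q^t*) *m Y *m kron I1 Q.
  have PQQ : kron I1 (P *m Q^t*) *m kron I1 Q = kron I1 P.
    by rewrite kron_mul mulmx1 -mulmxA QtQ mulmx1.
  have QQ1 : kron I1 (Q^t*) *m kron I1 Q = 1%:M by rewrite kron_mul mulmx1 QtQ kron1.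
  by rewrite adjmxM adjmx_kron1 trmxCK /Y !mulmxA PQQ -mulmxA QQ1 mulmx1.
rewrite env_block_kron1; apply: in_span_sum => l'; apply: in_span_sum => a'.
apply/in_spanZ/in_span_rescale; last first.
  exact: (in_span_self (fun p : 'I_k.+1 * 'I_k.+1 => env_block Y p.1 p.2) (l', a')).
by move=> p; rewrite sqrtC_eq0 mulf_neq0 ?gt_eqF.
Qed.

Lemma ptrace2_adj_spanned U P Q g e d : Q \is unitarymx ->
  (forall a, 0 <= g 0 a) -> (forall l, 0 < e 0 l) -> (forall a, 0 < d 0 a) ->
  kraus_adj_spanned
    (fun X => ptrace2 (U *m kron X (P^t* *m diag_mx g *m P) *m U^t*))
    (fun X => ptrace2 (kron I1 (Q^t* *m diag_mx e *m Q) *m U^t* *m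
                       kron X (Q^t* *m diag_mx d *m Q) *m U)).
Proof.
move=> QU g_ge0 e_gt0 d_gt0; do 4!eexists; split.
- exact: ptrace2_conj_kraus.
- exact: ptrace2_dual_kraus (fun l => ltW (e_gt0 l)) (fun a => ltW (d_gt0 a)).
- exact: env_block_adj_in_span.
Qed.

Lemma Lj_Ljdual_adj_spanned (HS : MM) (HE : KK) (V : BB) tau b0 b a :
  kraus_adj_spanned (Lj HS HE V tau b0) (Ljdual HS HE V tau b a).
Proof.
have [P [g [_ g_gt0 GE]]] := gibbs_posdef b0 HE.
have [P' [g' Gdec]] := gibbs_posdef b HE.
have [QU d_gt0 dE] := mxpowR_posdef a Gdec.
have [_ e_gt0 eE] := mxpowR_posdef (1 - a) Gdec.
rewrite /Lj /Ljdual GE dE eE.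
exact: ptrace2_adj_spanned (fun a => ltW (g_gt0 a)) e_gt0 d_gt0.
Qed.

End InteractionStep.

Section Protocols.
Variables (R : realType) (n M : nat) (k : 'I_M -> nat).
Variables (HS : 'M[R[i]]_n.+1) (HE : forall j, 'M[R[i]]_((k j).+1))
  (V : forall j, 'M[R[i]]_(n.+1 * (k j).+1)) (tau : 'I_M -> R) (beta_ref : R).

Lemma Lsharp_adj_spanned sharp (zeta0 zeta alpha : 'I_M -> R) : (0 < M)%N ->
  kraus_adj_spanned (Lsharp HS HE V tau beta_ref sharp zeta0)
                    (Lsharpdual HS HE V tau beta_ref sharp zeta alpha).
Proof.
move=> M_gt0.
have step j : kraus_adj_spanned (Lmap HS HE V tau beta_ref j zeta0)
                                (Lmapdual HS HE V tau beta_ref j zeta alpha).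
  exact: Lj_Ljdual_adj_spanned.
case: sharp; rewrite /Lsharp /Lsharpdual.
  elim: (enum 'I_M) => [|j s IH]; first exact: kraus_adj_spanned_id.
  exact: kraus_adj_spanned_comp IH (step j).
apply: kraus_adj_spannedZ; first by rewrite invr_gt0 ltr0n.
elim: (index_enum 'I_M) => [|j s IH].
  by apply: kraus_adj_spanned0 => X; rewrite big_nil.
by apply: (eq_kraus_adj_spanned (kraus_adj_spanned_add (step j) IH)) => X;
  rewrite big_cons.
Qed.

End Protocols.

Theorem mainTheorem17 (R : realType) (n M : nat) (k : 'I_M -> nat)
  (HS : 'M[R[i]]_n.+1) (HE : forall j : 'I_M, 'M[R[i]]_((k j).+1))
  (V : forall j : 'I_M, 'M[R[i]]_(n.+1 * (k j).+1))
  (tau : 'I_M -> R) (beta_ref : R) (sharp : protocol) :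
  (0 < M)%N ->
  HS \is hermsymmx ->
  (forall j, HE j \is hermsymmx) ->
  (forall j, V j \is hermsymmx) ->
  (forall j, 0 < tau j) ->
  0 < beta_ref ->
  (exists zeta : 'I_M -> R, primitive_cp (Lsharp HS HE V tau beta_ref sharp zeta)) ->
  forall zeta alpha : 'I_M -> R,
    primitive_cp (Lsharpdual HS HE V tau beta_ref sharp zeta alpha) /\
    0 < spectral_radius (Lsharpdual HS HE V tau beta_ref sharp zeta alpha).
Proof.
move=> M_gt0 _ _ _ _ _ [zeta0 Lprim] zeta alpha.
have Ladj := Lsharp_adj_spanned HS HE V tau beta_ref sharp zeta0 zeta alpha M_gt0.
have Ldprim := primitive_cp_adj_spanned Ladj Lprim.
by split; last exact: primitive_spectral_radius_gt0.
Qed.
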